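(* Let $\mu,\nu$ be finite measures on $\mathbb R$ with finite first moments, and suppose $\mu\le_E\nu$. Then $(P_\nu-P_\mu)^c\in\mathcal D(\nu(\mathbb R)-\mu(\mathbb R),\overline{\nu}-\overline{\mu})$.
   Context: For a finite measure $\eta$ on $\mathbb R$ with finite first moment, $\overline\eta=\int x\,\eta(dx)$ and $P_\eta(k)=\int(k-x)^+\eta(dx)$, $k\in\mathbb R$. We write $\mu\le_E\nu$ (extended convex order) if $\int f\,d\mu\le\int f\,d\nu$ for all non-negative convex $f:\mathbb R\to\mathbb R_+$. For $u:\mathbb R\to\mathbb R$, $u^c$ is the largest convex function below $u$. For $\alpha\ge0,\beta\in\mathbb R$, $\mathcal D(\alpha,\beta)$ is the set of increasing convex functions $f:\mathbb R\to\mathbb R_+$ with $\lim_{z\to-\infty}f(z)=0$ and $\lim_{z\to\infty}\{f(z)-(\alpha z-\beta)\}=0$. *)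

From mathcomp Require Import all_boot all_order all_algebra.
From mathcomp Require Import all_classical all_reals all_analysis.
Import Order.TTheory GRing.Theory Num.Theory numFieldNormedType.Exports.

Set Implicit Arguments.
Unset Strict Implicit.
Unset Printing Implicit Defensive.

Local Open Scope classical_set_scope.
Local Open Scope ring_scope.

Section defs.
Variable R : realType.

Definition convex_on_R (f : R -> R) : Prop :=
  convex_function (setT : set (convex_lmodType R^o)) (f : R^o -> R^o).

Definition finite_first_moment (eta : {finite_measure set R -> \bar R}) : Prop :=
  eta.-integrable setT (fun x : R => x%:E).

Definition total_mass (eta : {finite_measure set R -> \bar R}) : R := fine (eta setT).

Definition barycenter (eta : {finite_measure set R -> \bar R}) : R :=
  fine (\int[eta]_x (x%:E))%E.

Definition put_price (eta : {finite_measure set R -> \bar R}) (k : R) : R :=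
  fine (\int[eta]_x ((Num.max (k - x) 0)%:E))%E.

Definition ext_convex_le (mu nu : {finite_measure set R -> \bar R}) : Prop :=
  forall f : R -> R, (forall x, 0 <= f x) -> convex_on_R f ->
    (\int[mu]_x (f x)%:E <= \int[nu]_x (f x)%:E)%E.

Definition is_convex_hull (u f : R -> R) : Prop :=
  [/\ convex_on_R f, (forall x, f x <= u x) &
      (forall g : R -> R, convex_on_R g -> (forall x, g x <= u x) ->
         forall x, g x <= f x)].

Definition classD (alpha beta : R) (f : R -> R) : Prop :=
  [/\ {homo f : x y / x <= y},
      convex_on_R f,
      (forall z, 0 <= f z),
      f z @[z --> -oo] --> 0 &
      (f z - (alpha * z - beta)) @[z --> +oo] --> 0].

End defs.

(* Put-call parity writes P_eta(k) = k eta(R) - \overline{eta} + C_eta(k), with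
   C_eta(k) = \int (x - k)^+ eta(dx).  Puts and calls are integrals of nonnegative
   convex payoffs, so under mu <=_E nu the spread u = P_nu - P_mu dominates both 0
   and the line alpha k - beta, and hence so does its convex hull u^c <= u.  Puts
   vanish at -oo and calls at +oo (dominated convergence), which squeezes u^c to 0
   at -oo and to the line at +oo; a nonnegative convex function vanishing at -oo
   is nondecreasing. *)

From mathcomp Require Import all_boot all_order all_algebra.
From mathcomp Require Import all_classical all_reals all_analysis.
From mathcomp Require Import ring lra measurable_realfun.
Import Order.TTheory GRing.Theory Num.Theory numFieldNormedType.Exports.
Local Open Scope classical_set_scope.
Local Open Scope ring_scope.

Section convexity.
Context {R : realType}.
Implicit Types f g u : R -> R.

Lemma convex_on_RP f : convex_on_R f <->
  (forall t x y, 0 <= t -> t <= 1 ->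
     f (t * x + (1 - t) * y) <= t * f x + (1 - t) * f y).
Proof.
split=> [fC t x y t0 t1|fC t x y _ _].
  by have := fC (Itv01 t0 t1) x y; rewrite !inE /= !convRE; apply.
by rewrite !convRE; apply: fC; [exact: ge0 | exact: le1].
Qed.

Lemma convex_on_R_affine f :
  (forall t x y, f (t * x + (1 - t) * y) = t * f x + (1 - t) * f y) ->
  convex_on_R f.
Proof. by move=> fA; apply/convex_on_RP => t x y _ _; rewrite fA. Qed.

Lemma convex_on_R_max0 f : convex_on_R f -> convex_on_R (fun x => Num.max (f x) 0).
Proof.
move=> /convex_on_RP fC; apply/convex_on_RP => t x y t0 t1.
have := fC t x y t0 t1.
have [fx0 fy0] : 0 <= Num.max (f x) 0 /\ 0 <= Num.max (f y) 0.
  by rewrite !le_max lexx !orbT.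
have [fxM fyM] : f x <= Num.max (f x) 0 /\ f y <= Num.max (f y) 0.
  by rewrite !le_max !lexx.
by rewrite ge_max => fxy; apply/andP; split; nra.
Qed.

(* A decrease f y < f x with x < y would propagate along the chord to the
   left and keep f above f x - f y near -oo. *)
Lemma convex_cvgNy0_nondecreasing f : convex_on_R f -> (forall x, 0 <= f x) ->
  f z @[z --> -oo] --> 0 -> {homo f : x y / x <= y}.
Proof.
move=> /convex_on_RP fC f0 fNy x y xy; rewrite leNgt; apply/negP => fyx.
have d0 : 0 < f x - f y by rewrite subr_gt0.
have [M [_ fM]] := (cvgrPdist_lt _ _).1 fNy _ d0.
pose z := Num.min (M - 1) (x - 1).
have [zM zx] : z < M /\ z < x by rewrite !gt_min; split; apply/orP; [left|right]; lra.
have := fM z zM; rewrite sub0r normrN ger0_norm // => fz.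
pose t := (y - x) / (y - z).
have yz : 0 < y - z by lra.
have [t0 t1] : 0 <= t /\ t <= 1.
  by split; [apply: divr_ge0 | rewrite ler_pdivrMr //]; lra.
have := fC t z y t0 t1.
have -> : t * z + (1 - t) * y = x by rewrite /t; field; lra.
have := f0 y; have := f0 z; nra.
Qed.

Definition convex_minorant u g := convex_on_R g /\ forall x, g x <= u x.

Definition convex_envelope u x := sup [set g x | g in convex_minorant u].

Lemma convex_envelopeP {u g0} : convex_minorant u g0 ->
  is_convex_hull u (convex_envelope u).
Proof.
move=> g0u.
have ub x : has_ubound [set g x | g in convex_minorant u].
  by exists (u x) => _ [g [_ gu] <-].
have ne x : [set g x | g in convex_minorant u] !=set0 by exists (g0 x), g0.
have le_env g x : convex_minorant u g -> g x <= convex_envelope u x.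
  by move=> gu; apply: (ub_le_sup (ub x)); exists g.
split=> [||g gC gu x]; last exact: le_env.
  apply/convex_on_RP => t x y t0 t1; apply: ge_sup => // _ [g gu <-].
  have := (convex_on_RP g).1 gu.1 t x y t0 t1.
  by have := le_env g x gu; have := le_env g y gu; nra.
by move=> x; apply: ge_sup => // _ [g [_ gu] <-].
Qed.

End convexity.

Section stop_loss.
Context {R : realType} (eta : {finite_measure set R -> \bar R}).

Definition stop_loss (phi : R -> R) (k : R) : R :=
  fine (\int[eta]_x (Num.max (phi x - k) 0)%:E)%E.

Lemma stop_loss_ge0 phi k : 0 <= stop_loss phi k.
Proof. by apply/fine_ge0/integral_ge0 => x _; rewrite lee_fin le_max lexx orbT. Qed.

Context {phi : R -> R}.
Hypotheses (phi_meas : measurable_fun setT phi)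
  (phi_int : eta.-integrable setT (fun x => (phi x)%:E)).

Lemma measurable_stop_loss_payoff k :
  measurable_fun setT (fun x => Num.max (phi x - k) 0).
Proof. exact/measurable_maxr/measurable_cst/measurable_funB. Qed.

Lemma integrable_stop_loss_payoff k :
  eta.-integrable setT (fun x => (Num.max (phi x - k) 0)%:E).
Proof.
apply: (le_integrable measurableT (g := fun x => (phi x - k)%:E)).
- by apply/measurable_EFinP; exact: measurable_stop_loss_payoff.
- move=> x _ /=; rewrite lee_fin ger0_norm ?le_max ?lexx ?orbT //.
  by rewrite ge_max normr_ge0 ler_norm.
- under eq_fun do rewrite EFinB.
  exact: integrableB (finite_measure_integrable_cst _ _ measurableT).
Qed.

Lemma stop_loss_fin_num k :
  (\int[eta]_x (Num.max (phi x - k) 0)%:E)%E \is a fin_num.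
Proof. exact/(integrable_fin_num measurableT)/integrable_stop_loss_payoff. Qed.

Lemma stop_loss_nonincreasing : {homo stop_loss phi : k1 k2 /~ k1 <= k2}.
Proof.
move=> k1 k2 k12; apply: fine_le; rewrite ?stop_loss_fin_num //.
apply: le_integral; rewrite ?integrable_stop_loss_payoff // => x _.
by rewrite lee_fin ge_max !le_max lexx orbT andbT lerB.
Qed.

Lemma stop_loss_cvgn : stop_loss phi n%:R @[n --> \oo] --> 0.
Proof.
pose f_ n x := (Num.max (phi x - n%:R) 0)%:E.
have f_meas n : measurable_fun setT (f_ n).
  by apply/measurable_EFinP; exact: measurable_stop_loss_payoff.
have f_cvg : {ae eta, forall x, setT x -> f_ ^~ x @ \oo --> (cst 0%E : R -> \bar R) x}.
  apply: aeW => x _; apply: cvg_near_cst; near=> n.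
  have : phi x <= n%:R by near: n; exact: nbhs_infty_ger.
  by move=> xn; rewrite /f_; congr EFin; apply/max_idPr; lra.
have f_dom : {ae eta, forall x n, setT x -> `|f_ n x| <= `|phi x|%:E}%E.
  apply: aeW => x n _; rewrite /f_ /= lee_fin ger0_norm ?le_max ?lexx ?orbT //.
  by rewrite ge_max normr_ge0 (le_trans _ (ler_norm _)) // lerBlDr lerDl.
have [_ _] := dominated_convergence measurableT f_meas (measurable_cst _) f_cvg
  (integrable_abse phi_int) f_dom.
by rewrite integral0 => /fine_cvgP [].
Unshelve. all: by end_near.
Qed.

Lemma stop_loss_cvgy : stop_loss phi k @[k --> +oo] --> 0.
Proof.
apply/cvgrPdist_lt => e e0.
have [N _ hN] := (cvgrPdist_lt _ _).1 stop_loss_cvgn e e0.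
exists N%:R; split; first exact: num_real.
move=> k /ltW Nk; have := hN N (leqnn N).
rewrite /= !sub0r !normrN !ger0_norm ?stop_loss_ge0 //.
exact/le_lt_trans/stop_loss_nonincreasing.
Qed.

End stop_loss.

Lemma ext_convex_le_stop_loss {R : realType}
    (mu nu : {finite_measure set R -> \bar R}) (phi : R -> R) (k : R) :
  measurable_fun setT phi -> convex_on_R phi ->
  mu.-integrable setT (fun x => (phi x)%:E) ->
  nu.-integrable setT (fun x => (phi x)%:E) ->
  ext_convex_le mu nu -> stop_loss mu phi k <= stop_loss nu phi k.
Proof.
move=> phi_meas /convex_on_RP phiC mu_int nu_int munu.
apply: fine_le; rewrite ?stop_loss_fin_num //.
apply: munu => [x|]; first by rewrite le_max lexx orbT.
apply/convex_on_R_max0/convex_on_RP => t x y t0 t1.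
by have := phiC t x y t0 t1; lra.
Qed.

Section put_price.
Context {R : realType} (eta : {finite_measure set R -> \bar R}).
Hypothesis eta_mom : finite_first_moment eta.

Let id_meas : measurable_fun setT (@id R) := @measurable_id _ _ setT.

Lemma put_price_stop_loss k : put_price eta k = stop_loss eta -%R (- k).
Proof. by congr fine; apply: eq_integral => x _; rewrite opprK addrC. Qed.

Lemma put_call_parity k :
  put_price eta k = k * total_mass eta - barycenter eta + stop_loss eta id k.
Proof.
have cst_int := finite_measure_integrable_cst eta k measurableT.
have call_int := integrable_stop_loss_payoff eta id_meas eta_mom k.
have fin_mass : eta setT \is a fin_num by exact: fin_num_measure.
have fin_bary : (\int[eta]_x x%:E)%E \is a fin_num by exact: integrable_fin_num.
have fin_call := stop_loss_fin_num eta id_meas eta_mom k.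
have fin_fwd : (k%:E * eta setT - \int[eta]_x x%:E)%E \is a fin_num.
  by rewrite fin_numB fin_numM.
rewrite /put_price /stop_loss /total_mass /barycenter.
transitivity (fine (\int[eta]_x ((k%:E - x%:E) + (Num.max (x - k) 0)%:E))%E).
  congr fine; apply: eq_integral => x _; rewrite -EFinB -EFinD; congr EFin.
  by case: (leP (k - x) 0); case: (leP (x - k) 0); lra.
rewrite integralD //; last exact: integrableB.
by rewrite integralB // integral_cst // fineD // fineB ?fin_numM // fineM.
Qed.

Lemma put_price_cvgNy : put_price eta k @[k --> -oo] --> 0.
Proof.
apply/cvgNy_compNP.
have -> : put_price eta \o -%R = stop_loss eta -%R.
  by apply/funext => k /=; rewrite put_price_stop_loss opprK.
exact: stop_loss_cvgy (measurable_funN id_meas) (integrableN eta_mom).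
Qed.

End put_price.

Section put_spread.
Context {R : realType} (mu nu : {finite_measure set R -> \bar R}).
Hypotheses (mu_mom : finite_first_moment mu) (nu_mom : finite_first_moment nu)
  (munu : ext_convex_le mu nu).

Definition put_spread k := put_price nu k - put_price mu k.

Definition put_spread_asymptote k :=
  (total_mass nu - total_mass mu) * k - (barycenter nu - barycenter mu).

Lemma put_spread_sub_asymptote k :
  put_spread k - put_spread_asymptote k = stop_loss nu id k - stop_loss mu id k.
Proof. by rewrite /put_spread /put_spread_asymptote !put_call_parity //; ring. Qed.

Lemma convex_minorant_put_spread0 : convex_minorant put_spread (fun=> 0).
Proof.
split=> [|k]; first by apply: convex_on_R_affine => t x y; ring.
rewrite subr_ge0 !put_price_stop_loss //.
apply: ext_convex_le_stop_loss (integrableN mu_mom) (integrableN nu_mom) munu.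
  exact/measurable_funN/measurable_id.
by apply: convex_on_R_affine => t x y; ring.
Qed.

Lemma convex_minorant_put_spread_asymptote :
  convex_minorant put_spread put_spread_asymptote.
Proof.
split=> [|k].
  by apply: convex_on_R_affine => t x y; rewrite /put_spread_asymptote; ring.
rewrite -subr_ge0 put_spread_sub_asymptote subr_ge0.
by apply: ext_convex_le_stop_loss => //; exact: convex_on_R_affine.
Qed.

Lemma put_spread_cvgNy : put_spread k @[k --> -oo] --> 0.
Proof. by rewrite -(subr0 0); apply: cvgB; exact: put_price_cvgNy. Qed.

Lemma put_spread_sub_asymptote_cvgy :
  put_spread k - put_spread_asymptote k @[k --> +oo] --> 0.
Proof.
under eq_fun do rewrite put_spread_sub_asymptote.
by rewrite -(subr0 0); apply: cvgB; exact: stop_loss_cvgy.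
Qed.

End put_spread.

Theorem corollary2p5 (R : realType) (mu nu : {finite_measure set R -> \bar R}) :
  finite_first_moment mu -> finite_first_moment nu ->
  ext_convex_le mu nu ->
  exists f : R -> R,
    is_convex_hull (fun k => put_price nu k - put_price mu k) f /\
    classD (total_mass nu - total_mass mu) (barycenter nu - barycenter mu) f.
Proof.
move=> mu_mom nu_mom munu.
have zero_minor := convex_minorant_put_spread0 _ _ mu_mom nu_mom munu.
have asymptote_minor := convex_minorant_put_spread_asymptote _ _ mu_mom nu_mom munu.
have [fC f_le f_ge] := convex_envelopeP zero_minor.
set f := convex_envelope _ in fC f_le f_ge.
have f_ge0 x : 0 <= f x := f_ge _ zero_minor.1 zero_minor.2 x.
have asymptote_le_f x : put_spread_asymptote mu nu x <= f x :=
  f_ge _ asymptote_minor.1 asymptote_minor.2 x.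
have f_cvgNy : f z @[z --> -oo] --> 0.
  apply: (@squeeze_cvgr _ _ _ _ (cst 0) (put_spread mu nu)); last 2 first.
  - exact: cvg_cst.
  - exact: put_spread_cvgNy.
  by near=> z; rewrite f_ge0 f_le.
exists f; split=> //; split=> //.
- exact: convex_cvgNy0_nondecreasing.
- apply: (@squeeze_cvgr _ _ _ _ (cst 0)
      (fun z => put_spread mu nu z - put_spread_asymptote mu nu z)); last 2 first.
  + exact: cvg_cst.
  + exact: put_spread_sub_asymptote_cvgy.
  by near=> z; rewrite subr_ge0 asymptote_le_f lerB ?f_le.
Unshelve. all: by end_near.
Qed.
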